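(* Let $X$ be a Hausdorff space without isolated points. If \textsc{Bob} has a winning strategy in the game $\mathsf{BM}_\mathrm{fin}(X)$, then $X$ is productively Baire.
   Context: The game $\mathsf{BM}_\mathrm{fin}(X)$ on a topological space $X$ is played by \textsc{Alice} and \textsc{Bob} as follows. \textsc{Alice} plays a non-empty open set $A_0$; \textsc{Bob} plays a finite collection $\mathcal{B}_0$ of non-empty open subsets of $A_0$. In inning $n+1$, for each $B \in \mathcal{B}_n$ \textsc{Alice} plays a non-empty open set $A_B \subseteq B$; let $\mathcal{A}_{n+1}=\{A_B : B\in\mathcal{B}_n\}$; then \textsc{Bob} plays a finite collection $\mathcal{B}_{n+1}$ of non-empty open subsets of $\bigcup\mathcal{A}_{n+1}$. Put $B_n=\bigcup\mathcal{B}_n$. \textsc{Bob} wins the play if $\bigcap_{n\in\omega}B_n\neq\emptyset$; otherwise \textsc{Alice} wins. A Baire space is a space in which countable intersections of dense open sets are dense. A Baire space $X$ is productively Baire if $X\times Y$ is Baire for every Baire space $Y$. *)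

From HB Require Import structures.
From mathcomp Require Import all_boot all_order all_algebra.
From mathcomp Require Import all_classical all_reals all_analysis.
Set Implicit Arguments. Unset Strict Implicit. Unset Printing Implicit Defensive.
Import Order.TTheory GRing.Theory Num.Theory.
Local Open Scope classical_set_scope.

Definition baire_space (T : topologicalType) : Prop :=
  forall F : (set T)^nat, (forall i, open (F i) /\ dense (F i)) ->
    dense (\bigcap_i F i).

Definition productively_baire (X : topologicalType) : Prop :=
  baire_space X /\ forall Y : topologicalType, baire_space Y -> baire_space (X * Y)%type.

(* A finite collection of open sets is represented by a list; a move of
   Alice in inning 0 is the singleton list [:: A_0]; a move of Alice in
   inning n+1 is the list [:: A_B | B in Bob's previous list] (same length,
   entrywise A_B ⊆ B, and equal B's receive equal A_B). *)
Definition bigU (X : topologicalType) (s : seq (set X)) : set X :=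
  [set x | exists2 i, (i < size s)%N & nth set0 s i x].

Definition alice_start_ok (X : topologicalType) (a0 : seq (set X)) : Prop :=
  exists A0, a0 = [:: A0] /\ open A0 /\ A0 !=set0.

Definition bob_ok (X : topologicalType) (al bl : seq (set X)) : Prop :=
  forall i, (i < size bl)%N ->
    open (nth set0 bl i) /\ nth set0 bl i !=set0 /\ nth set0 bl i `<=` bigU al.

Definition alice_ok (X : topologicalType) (bl al : seq (set X)) : Prop :=
  size al = size bl /\
  (forall i, (i < size bl)%N ->
    open (nth set0 al i) /\ nth set0 al i !=set0 /\ nth set0 al i `<=` nth set0 bl i) /\
  (forall i j, (i < size bl)%N -> (j < size bl)%N ->
    nth set0 bl i = nth set0 bl j -> nth set0 al i = nth set0 al j).

(* A strategy for Bob maps the list of Alice's moves so far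
   [:: a_0; ...; a_n] to Bob's move B_n. *)
Definition bob_strategy (X : topologicalType) := seq (seq (set X)) -> seq (set X).

Definition bob_winning (X : topologicalType) (sigma : bob_strategy X) : Prop :=
  forall a : nat -> seq (set X), alice_start_ok (a 0%N) ->
    let b := fun n => sigma (mkseq a n.+1) in
    (forall n, (forall k, (k < n)%N -> alice_ok (b k) (a k.+1)) -> bob_ok (a n) (b n)) /\
    ((forall n, alice_ok (b n) (a n.+1)) -> (\bigcap_n bigU (b n)) !=set0).

Definition bob_has_winning_strategy (X : topologicalType) : Prop :=
  exists sigma : bob_strategy X, bob_winning sigma.

From HB Require Import structures.
From mathcomp Require Import all_boot all_order all_algebra.
From mathcomp Require Import all_classical all_reals all_analysis.
Local Open Scope classical_set_scope.

Set Implicit Arguments.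
Unset Strict Implicit.
Unset Printing Implicit Defensive.

(* Let G_n be dense open in X * Y and U * V a nonempty open rectangle.  Grow a
   tree of partial plays of Bob's winning strategy sigma whose nodes carry
   nonempty open labels W in Y: a child of a node answers sigma with shrunken
   sets A_B so that every A_B * W lies in G_n, and the children of a node form
   a maximal family with pairwise disjoint labels.  The union of the labels at
   level n is then open and dense in V, so since Y is Baire some y in V lies in
   all of them; by disjointness the nodes whose label contains y form a single
   branch, i.e. a play along sigma.  Bob wins it, which gives x with (x, y) in
   U * V and in every G_n.  Taking Y discrete shows that X itself is Baire. *)

Section product_topology.
Variables X Y : topologicalType.

Lemma open_setX (A : set X) (B : set Y) : open A -> open B -> open (A `*` B).
Proof.
move=> oA oB; rewrite openE => -[x y] [/= Ax By].
by exists (A, B) => //; split; apply: open_nbhs_nbhs.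
Qed.

Lemma open_rectangle (W : set (X * Y)) (z : X * Y) :
  open W -> W z -> exists P Q, [/\ open P, open Q, P z.1, Q z.2 & P `*` Q `<=` W].
Proof.
rewrite openE => oW /oW [[P Q] [/= + +] PQW]; rewrite !nbhsE.
move=> [P' [oP' P'z] P'P] [Q' [oQ' Q'z] Q'Q].
by exists P', Q'; split => // -[a b] [/= /P'P Pa /Q'Q Qb]; apply: PQW.
Qed.

Lemma dense_open_rectangle (G : set (X * Y)) (B : set X) (W : set Y) :
  open G -> dense G -> open B -> B !=set0 -> open W -> W !=set0 ->
  exists A W', [/\ open A /\ A !=set0, A `<=` B, open W' /\ W' !=set0,
                   W' `<=` W & A `*` W' `<=` G].
Proof.
move=> oG dG oB [x0 Bx0] oW [y0 Wy0].
have oBW := open_setX oB oW.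
have [[x y] [BWxy Gxy]] := dG _ (ex_intro _ (x0, y0) (conj Bx0 Wy0)) oBW.
have [P [Q [oP oQ /= Px Qy PQ]]] := open_rectangle (openI oBW oG) (conj BWxy Gxy).
case: BWxy => /= Bx Wy.
exists (P `&` B), (Q `&` W); split; [| by move=> ? [] | | by move=> ? [] |].
- by split; [exact: openI | exists x].
- by split; [exact: openI | exists y].
by move=> [a b] [[/= Pa _] [Qb _]]; have [] := PQ (a, b) (conj Pa Qb).
Qed.

(* [f] shrinks each [B] in [bl]; being a function of [B], it shrinks equal
   members of [bl] equally, as Alice's moves must. *)
Lemma dense_open_rectangles (G : set (X * Y)) (W : set Y) (bl : seq (set X)) :
  open G -> dense G -> open W -> W !=set0 ->
  {in bl, forall B, open B /\ B !=set0} ->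
  exists (f : set X -> set X) (W' : set Y),
    [/\ open W', W' !=set0, W' `<=` W &
     {in bl, forall B, [/\ open (f B), f B !=set0, f B `<=` B & f B `*` W' `<=` G]}].
Proof.
move=> oG dG; elim: bl W => [|B bl IH] W oW W0 hbl.
  by exists id, W; split=> // B; rewrite in_nil.
have hbl' : {in bl, forall C, open C /\ C !=set0}.
  by move=> C Cbl; apply: hbl; rewrite inE Cbl orbT.
have [f [W1 [oW1 W10 W1W hf]]] := IH W oW W0 hbl'.
have [oB B0] := hbl B (mem_head _ _).
have [A [W' [[oA A0] AB [oW' W'0] W'W1 AW'G]]] :=
  dense_open_rectangle oG dG oB B0 oW1 W10.
exists (fun C => if C == B then A else f C), W'.
split => //; first by move=> t /W'W1/W1W.
move=> C; rewrite inE; case: eqP => [-> _ //|_ /= Cbl].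
have [oC C0 CB fCG] := hf C Cbl; split => // -[a b] [/= fCa /W'W1 W1b].
exact: fCG.
Qed.

End product_topology.

Lemma maximal_disjoint_meets (I T : Type) (F : I -> set T) (M B : set I) (c : I) :
  maximal_disjoint_subcollection F M B -> B c -> F c !=set0 ->
  exists2 q, M q & F q `&` F c !=set0.
Proof.
move=> [MB Mtriv Mmax] Bc [z Fcz]; apply: contrapT => noq.
have {}noq q : M q -> ~ (F q `&` F c !=set0) by move=> Mq qc; apply: noq; exists q.
have cM : ~ M c by move=> /noq; apply; exists z.
apply: (Mmax (M `|` [set c])).
- by split=> [q Mq|/(_ c (or_intror erefl))//]; left.
- by move=> q [/MB|->].
move=> i j [Mi|->] [Mj|->] ij //; first exact: Mtriv.
- by case: (noq i Mi).
- by case: (noq j Mj); rewrite setIC.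
Qed.

Lemma baire_meets_bigcap (Y : topologicalType) (V : set Y) (D : (set Y)^nat) :
  baire_space Y -> open V -> V !=set0 -> (forall n, open (D n)) ->
  (forall n O, open O -> O `&` V !=set0 -> O `&` D n !=set0) ->
  exists2 y, V y & forall n, D n y.
Proof.
(* The [D n] are only dense in [V]; padding them with the exterior of [V]
   makes them dense in [Y]. *)
move=> bY oV V0 oD dD; pose F n := D n `|` ~` closure V.
have [y [Vy Fy]] : V `&` \bigcap_n F n !=set0.
  apply: (bY F _ V V0 oV) => n; split.
    by apply: openU => //; rewrite openC; exact: closed_closure.
  move=> O [x Ox] oO; have [OV|OV] := pselect (O `&` V !=set0).
    by have [y [Oy Dy]] := dD n O oO OV; exists y; split => //; left.
  exists x; split => //; right => /(_ O (open_nbhs_nbhs (conj oO Ox))) [t [Vt Ot]].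
  by apply: OV; exists t.
by exists y => // n; case: (Fy n I) => // /(_ (subset_closure Vy)).
Qed.

Lemma baire_bool : baire_space bool.
Proof.
move=> F hF O [b Ob] oO; exists b; split => // n _.
have [b' [/= -> Fb]] := (hF n).2 [set b] (ex_intro _ b erefl) (discrete_open _).
exact: Fb.
Qed.

Lemma baire_prodl (X Y : topologicalType) (y : Y) :
  baire_space (X * Y)%type -> baire_space X.
Proof.
move=> bXY F hF O [x Ox] oO.
have hFT n : open (F n `*` [set: Y]) /\ dense (F n `*` [set: Y]).
  split; first exact: open_setX (hF n).1 openT.
  move=> W [w Ww] oW; have [P [Q [oP oQ Pw Qw PQ]]] := open_rectangle oW Ww.
  have [x' [Px' Fx']] := (hF n).2 P (ex_intro _ _ Pw) oP.
  by exists (x', w.2); split; [exact: PQ|].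
have [[x' y'] [[/= Ox' _] Fx'y']] :=
  bXY _ hFT (O `*` setT) (ex_intro _ (x, y) (conj Ox I)) (open_setX oO openT).
by exists x'; split => // n _; have [] := Fx'y' n I.
Qed.

Section bob_strategy.
Variables (X : topologicalType) (sigma : bob_strategy X).
Hypothesis sigma_win : bob_winning sigma.

(* A partial play is recorded by Alice's moves alone; Bob's are [sigma] of
   their prefixes. *)
Definition legal_play (s : seq (seq (set X))) :=
  [/\ (0 < size s)%N, alice_start_ok (nth [::] s 0) &
   forall k, (k.+1 < size s)%N -> alice_ok (sigma (take k.+1 s)) (nth [::] s k.+1)].

Lemma legal_play_rcons s a :
  legal_play s -> alice_ok (sigma s) a -> legal_play (rcons s a).
Proof.
move=> [s0 st hk] ha; split; [by rewrite size_rcons | by rewrite nth_rcons s0 |].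
move=> k; rewrite size_rcons ltnS leq_eqVlt => /orP[/eqP ks|ks].
  by rewrite -cats1 takel_cat ks ?take_size // nth_cat ltnn subnn.
by rewrite -cats1 takel_cat ?(ltnW ks) // nth_cat ks; apply: hk.
Qed.

Lemma legal_play_bob_ok s : legal_play s -> bob_ok (last [::] s) (sigma s).
Proof.
move=> [s0 st hk]; have /= [bob _] := sigma_win st.
rewrite -nth_last -[in sigma s](mkseq_nth [::] s) -(prednK s0).
apply: bob => k kn; have ks : (k.+1 < size s)%N by rewrite -(prednK s0).
by rewrite /mkseq map_nth_iota0 ?(ltnW ks) //; exact: hk.
Qed.

Lemma bob_winning_meets (a : nat -> seq (set X)) :
  alice_start_ok (a 0%N) -> (forall n, alice_ok (sigma (mkseq a n.+1)) (a n.+1)) ->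
  exists x, forall n, bigU (a n) x.
Proof.
move=> st ha; have /= [bob win] := sigma_win st; have [x xB] := win ha.
exists x => n; have [i ilt Bx] := xB n I.
by have [_ [_ ]] := bob n (fun k _ => ha k) i ilt; apply.
Qed.

End bob_strategy.

Section strategy_tree.
Variables (X Y : topologicalType) (sigma : bob_strategy X).
Hypothesis sigma_win : bob_winning sigma.
Variable G : (set (X * Y))^nat.
Hypothesis G_open_dense : forall n, open (G n) /\ dense (G n).
Variables (U : set X) (V : set Y).
Hypotheses (oU : open U) (U0 : U !=set0) (oV : open V) (V0 : V !=set0).

Local Notation node := (seq (seq (set X)) * set Y)%type.

Definition tree_root : node := ([:: [:: U]], V).

Definition tree_child (H : set (X * Y)) (p c : node) :=
  [/\ open c.2, c.2 !=set0, c.2 `<=` p.2 &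
   exists a, [/\ c.1 = rcons p.1 a, alice_ok (sigma p.1) a &
                 {in a, forall A, A `*` c.2 `<=` H}]].

Definition tree_children (H : set (X * Y)) (p : node) : set node :=
  proj1_sig (ex_maximal_disjoint_subcollection snd (tree_child H p)).

Lemma tree_childrenP H p :
  maximal_disjoint_subcollection snd (tree_children H p) (tree_child H p).
Proof. by rewrite /tree_children; case: ex_maximal_disjoint_subcollection. Qed.

Lemma tree_children_sub H p : tree_children H p `<=` tree_child H p.
Proof. by case: (tree_childrenP H p). Qed.

Fixpoint tree_level n : set node :=
  if n is m.+1 then \bigcup_(p in tree_level m) tree_children (G m) p
  else [set tree_root].

Definition tree_cover n : set Y := \bigcup_(p in tree_level n) p.2.

Lemma tree_levelP n p :
  tree_level n p -> [/\ legal_play sigma p.1, open p.2 & p.2 !=set0].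
Proof.
elim: n p => [_ -> | n IH p [q /IH [qplay _ _] /tree_children_sub]] /=.
  by split => //; split => //; exists U.
by move=> [oc c0 _ [a [-> aok _]]]; split => //; exact: legal_play_rcons.
Qed.

Lemma tree_level_child n p O : tree_level n p -> open O -> O `&` p.2 !=set0 ->
  exists2 c, tree_child (G n) p c & c.2 `<=` O.
Proof.
move=> /tree_levelP [pplay op _] oO Op.
have bob_open : {in sigma p.1, forall B, open B /\ B !=set0}.
  move=> B /(nthP set0) [i ilt <-].
  by have [oB [B0 _]] := legal_play_bob_ok sigma_win pplay ilt.
have [f [W [oW W0 WOp fG]]] := dense_open_rectangles (G_open_dense n).1
  (G_open_dense n).2 (openI oO op) Op bob_open.
exists (rcons p.1 (map f (sigma p.1)), W); last by move=> t /WOp [].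
split => //; first by move=> t /WOp [].
exists (map f (sigma p.1)); split => //.
- split; first by rewrite size_map.
  split => [i ilt | i j ilt jlt eij]; rewrite !(nth_map set0) ?eij //.
  by have [? ? ? _] := fG _ (mem_nth set0 ilt).
by move=> _ /mapP [B Bbl ->]; have [_ _ _] := fG B Bbl.
Qed.

Lemma tree_level_label_inj n p q :
  tree_level n p -> tree_level n q -> p.2 `&` q.2 !=set0 -> p = q.
Proof.
elim: n p q => [p q /= -> -> //|n IH p q /= [p' Lp' Mp] [q' Lq' Mq] [t [pt qt]]].
have [_ _ pp' _] := tree_children_sub Mp.
have [_ _ qq' _] := tree_children_sub Mq.
have pq' : p' = q' by apply: IH => //; exists t; split; [exact: pp' | exact: qq'].
by case: (tree_childrenP (G n) p') => _ + _; apply => //; [rewrite pq' | exists t].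
Qed.

Lemma open_tree_cover n : open (tree_cover n).
Proof. by apply: bigcup_open => p /tree_levelP []. Qed.

Lemma tree_cover_succ n O : open O -> O `&` tree_cover n !=set0 ->
  O `&` tree_cover n.+1 !=set0.
Proof.
move=> oO [y [Oy [p Lp py]]].
have [c pc cO] := tree_level_child Lp oO (ex_intro _ y (conj Oy py)).
have [_ c0 _ _] := pc.
have [q pq [t [qt ct]]] := maximal_disjoint_meets (tree_childrenP (G n) p) pc c0.
by exists t; split; [exact: cO | exists q => //; exists p].
Qed.

Lemma tree_cover_dense n O : open O -> O `&` V !=set0 -> O `&` tree_cover n !=set0.
Proof.
move=> oO OV; elim: n => [|n]; last exact: tree_cover_succ.
by case: OV => y [Oy Vy]; exists y; split => //; exists tree_root.
Qed.

Lemma tree_branch y : (forall n, tree_cover n y) ->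
  exists pk : nat -> node,
    [/\ pk 0%N = tree_root, forall k, (pk k).2 y &
        forall k, tree_child (G k) (pk k) (pk k.+1)].
Proof.
move=> yD; have /choice [pk /all_and2 [Lpk pky]] :
    forall k, exists p, tree_level k p /\ p.2 y.
  by move=> k; have [p] := yD k; exists p.
exists pk; split => [|//|k]; first exact: Lpk 0%N.
have [q Lq /tree_children_sub qk] := Lpk k.+1; have [_ _ kq _] := qk.
suff <- : q = pk k by [].
by apply: tree_level_label_inj Lq (Lpk k) _; exists y; split; [exact: kq|].
Qed.

Lemma tree_chain_point (pk : nat -> node) :
  pk 0%N = tree_root -> (forall k, tree_child (G k) (pk k) (pk k.+1)) ->
  exists2 x, U x & forall n t, (pk n.+1).2 t -> G n (x, t).
Proof.
move=> pk0 chain; pose a k := last [::] (pk k).1.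
have alice_move k : [/\ (pk k.+1).1 = rcons (pk k).1 (a k.+1),
    alice_ok (sigma (pk k).1) (a k.+1) &
    {in a k.+1, forall A, A `*` (pk k.+1).2 `<=` G k}].
  have [_ _ _ [a' [e aok aG]]] := chain k.
  by have -> : a k.+1 = a' by rewrite /a e last_rcons.
have play k : mkseq a k.+1 = (pk k).1.
  elim: k => [|k IH]; first by rewrite /mkseq /= /a pk0.
  by have [e _ _] := alice_move k; rewrite mkseqS IH e.
have start : alice_start_ok (a 0%N) by rewrite /a pk0; exists U.
have [x xa] : exists x, forall n, bigU (a n) x.
  apply: (bob_winning_meets sigma_win start) => n.
  by have [_ aok _] := alice_move n; rewrite play.
exists x; first by have [i] := xa 0%N; rewrite /a pk0; case: i.
move=> n t kt; have [_ _ aG] := alice_move n; have [j jlt ajx] := xa n.+1.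
exact: aG (mem_nth set0 jlt) (x, t) (conj ajx kt).
Qed.

Lemma strategy_tree_point : baire_space Y ->
  exists z, [/\ U z.1, V z.2 & forall n, G n z].
Proof.
move=> bY.
have [y Vy yD] := baire_meets_bigcap bY oV V0 open_tree_cover tree_cover_dense.
have [pk [pk0 pky chain]] := tree_branch yD.
have [x Ux xG] := tree_chain_point pk0 chain.
by exists (x, y); split => // n; apply: xG.
Qed.

End strategy_tree.

Lemma baire_prod_of_bob_winning (X Y : topologicalType) (sigma : bob_strategy X) :
  bob_winning sigma -> baire_space Y -> baire_space (X * Y)%type.
Proof.
move=> sigma_win bY F hF O [z Oz] oO.
have [P [Q [oP oQ Pz Qz PQ]]] := open_rectangle oO Oz.
have [w [Pw Qw Fw]] :=
  strategy_tree_point sigma_win hF oP (ex_intro _ _ Pz) oQ (ex_intro _ _ Qz) bY.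
by exists w; split => [|n _]; [exact: PQ (conj Pw Qw) | exact: Fw].
Qed.

Theorem proposition2p3 (X : topologicalType) :
  hausdorff_space X -> isolated [set: X] = set0 ->
  bob_has_winning_strategy X -> productively_baire X.
Proof.
move=> _ _ [sigma sigma_win].
have baire_prod := baire_prod_of_bob_winning sigma_win.
by split; [exact: baire_prodl true (baire_prod _ baire_bool) | exact: baire_prod].
Qed.
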